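(* Let $\alpha=\frac{8}{97}(11-2\sqrt6)$. The function $$x\mapsto \frac{E(x)^2-(1-x)K(x)^2}{x^2K(x)}$$ is strictly increasing on $(0,\alpha)$, and for all $x\in(0,\alpha)$, $$E(x)^2-(1-x)K(x)^2\ge \frac{\pi}{16}\,x^2K(x).$$
   Context: $K(x)={\cal K}(\sqrt x)$ and $E(x)={\cal E}(\sqrt x)$ for $x\in[0,1)$, where ${\cal K}(r)=\int_0^{\pi/2}(1-r^2\sin^2t)^{-1/2}dt$ and ${\cal E}(r)=\int_0^{\pi/2}(1-r^2\sin^2t)^{1/2}dt$ are the complete elliptic integrals of the first and second kind. *)

From Stdlib Require Import Reals.
From Coquelicot Require Import Coquelicot.
Open Scope R_scope.

Definition cK (r : R) : R :=
  RInt (fun t => / sqrt (1 - r ^ 2 * sin t ^ 2)) 0 (PI / 2).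
Definition cE (r : R) : R :=
  RInt (fun t => sqrt (1 - r ^ 2 * sin t ^ 2)) 0 (PI / 2).

Definition K (x : R) : R := cK (sqrt x).
Definition E (x : R) : R := cE (sqrt x).

Definition alpha8 : R := 8 / 97 * (11 - 2 * sqrt 6).

Definition ratio8 (x : R) : R :=
  (E x ^ 2 - (1 - x) * K x ^ 2) / (x ^ 2 * K x).

From Stdlib Require Import Reals Lra Psatz.
From Coquelicot Require Import Coquelicot.
Open Scope R_scope.

(* With s = sin^2 t and w = 1 - x s, put Phi m j x = int_0^(pi/2) s^m w^(-j-1/2) dt, so that
   K = Phi 0 0, E = Phi 0 0 - x Phi 1 0 and d/dx Phi m j = (j + 1/2) Phi (m+1) (j+1).
   Together with the relations x Phi 2 1 = Phi 1 1 - Phi 1 0 and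
   Phi 0 0 - Phi 1 0 = (1 - x) Phi 1 1 (integrate d/dt (sin t cos t / sqrt w)), the numerator
   N = E^2 - (1-x) K^2 satisfies N' = x Phi 1 0 ^ 2.  The derivative of N / (x^2 K) has the sign
   of psi = 2 x^2 Phi 1 0 ^ 2 K / (4 K + x Phi 1 1) - N, which vanishes at 0 and whose derivative
   has the sign of a bilinear expression B in the Phi's.  Writing 2 B - Phi 1 0 ^ 2 / 2 as a double
   integral over (t, v) of a kernel that is, up to a positive factor, a quadratic form in
   (sin^2 t, sin^2 v) with nonpositive discriminant shows B > 0 for x <= 51/100, beyond alpha.
   Finally N >= x^2 (pi/4)^2 / 2 since Phi 1 0 >= pi/4, so the increasing ratio stays above
   (pi/4)^2 / (2 K(y)) for small y, which tends to pi/16 as K(0) = pi/2. *)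

(** * Calculus on the real line *)

Lemma is_RInt_mult_l (f : R -> R) If c a b :
  is_RInt f a b If -> is_RInt (fun t => c * f t) a b (c * If).
Proof. exact (@is_RInt_scal R_NormedModule f a b c If). Qed.

Lemma is_RInt_add_scal (f g : R -> R) If Ig c a b :
  is_RInt f a b If -> is_RInt g a b Ig ->
  is_RInt (fun t => f t + c * g t) a b (If + c * Ig).
Proof.
  intros Hf Hg. exact (@is_RInt_plus R_NormedModule _ _ a b _ _ Hf (is_RInt_mult_l _ _ c _ _ Hg)).
Qed.

Lemma is_RInt_ext_R (f g : R -> R) a b If :
  (forall t, f t = g t) -> is_RInt f a b If -> is_RInt g a b If.
Proof. intros Hfg. apply is_RInt_ext. intros t _. apply Hfg. Qed.

Lemma is_RInt_ext_unique (f g : R -> R) a b If Ig :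
  (forall t, f t = g t) -> is_RInt f a b If -> is_RInt g a b Ig -> If = Ig.
Proof.
  intros Hfg Hf Hg. apply (is_RInt_ext_R _ _ _ _ _ Hfg) in Hf.
  apply (@is_RInt_unique R_CompleteNormedModule) in Hf, Hg. congruence.
Qed.

Lemma is_derive_pos_lt (f f' : R -> R) a b : a < b ->
  (forall c, a <= c <= b -> is_derive f c (f' c)) ->
  (forall c, a < c < b -> 0 < f' c) -> f a < f b.
Proof.
  intros Hab Hd Hpos.
  destruct (MVT_cor2 f f' a b Hab) as [c [Hc Hcab]].
  - intros c Hc. now apply is_derive_Reals, Hd.
  - pose proof (Hpos c Hcab). assert (0 < f' c * (b - a)) by (apply Rmult_lt_0_compat; lra).
    lra.
Qed.

Lemma is_derive_nonneg_le (f f' : R -> R) a b : a < b ->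
  (forall c, a <= c <= b -> is_derive f c (f' c)) ->
  (forall c, a < c < b -> 0 <= f' c) -> f a <= f b.
Proof.
  intros Hab Hd Hpos.
  destruct (MVT_cor2 f f' a b Hab) as [c [Hc Hcab]].
  - intros c Hc. now apply is_derive_Reals, Hd.
  - pose proof (Hpos c Hcab). assert (0 <= f' c * (b - a)) by (apply Rmult_le_pos; lra).
    lra.
Qed.

Lemma continuity_pt_ge_right (f : R -> R) a b m : a < b -> continuity_pt f a ->
  (forall y, a < y < b -> m <= f y) -> m <= f a.
Proof.
  intros Hab Hc Hge. apply Rnot_lt_le. intros Hlt.
  destruct (Hc (m - f a) ltac:(lra)) as [d [Hd Hnear]].
  set (y := a + Rmin d (b - a) / 2).
  assert (Hy : a < y < b /\ y - a < d).
  { unfold y. apply Rmin_case_strong; intros; lra. }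
  specialize (Hnear y). simpl in Hnear. unfold R_dist in Hnear.
  assert (Hfy : Rabs (f y - f a) < m - f a).
  { apply Hnear. split; [split; [exact I | lra] | rewrite Rabs_right; lra]. }
  apply Rabs_def2 in Hfy. pose proof (Hge y (proj1 Hy)). lra.
Qed.

(** * Polynomial inequalities *)

Definition bern3 (i : nat) (s : R) : R := s ^ i * (1 - s) ^ (3 - i).

Lemma bern3_ge_0 i s : 0 <= s <= 1 -> 0 <= bern3 i s.
Proof. intros Hs. unfold bern3. apply Rmult_le_pos; apply pow_le; lra. Qed.

Lemma discriminant_bound a b : 49/100 <= a <= 1 -> 49/100 <= b <= 1 ->
  a * b * (3/2 * (a + b) + a * b / 2) ^ 2
  <= 4 * (2*a*b + (1 - b) * (a/2 - 3*b/4)) * (2*a*b + (1 - a) * (b/2 - 3*a/4)).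
Proof.
  intros Ha Hb.
  set (s := (a - 49/100) * (100/51)). set (t := (b - 49/100) * (100/51)).
  assert (Hs : 0 <= s <= 1) by (unfold s; lra). assert (Ht : 0 <= t <= 1) by (unfold t; lra).
  replace a with (49/100 + 51/100 * s) by (unfold s; field).
  replace b with (49/100 + 51/100 * t) by (unfold t; field).
  match goal with |- ?l <= ?r => enough (0 <= r - l) by lra end.
  (* All coefficients in the degree-(3,3) Bernstein basis of [0,1]^2 are positive. *)
  match goal with |- 0 <= ?d => replace d with
   (363766863999/4000000000000 * (bern3 0 s * bern3 0 t)
    + 25098794259/40000000000 * (bern3 0 s * bern3 1 t + bern3 1 s * bern3 0 t)
    + 267155547/200000000 * (bern3 0 s * bern3 2 t + bern3 2 s * bern3 0 t)
    + 546399/500000 * (bern3 0 s * bern3 3 t + bern3 3 s * bern3 0 t)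
    + 764922591/200000000 * (bern3 1 s * bern3 1 t)
    + 28726047/4000000 * (bern3 1 s * bern3 2 t + bern3 2 s * bern3 1 t)
    + 3066/625 * (bern3 1 s * bern3 3 t + bern3 3 s * bern3 1 t)
    + 244917/20000 * (bern3 2 s * bern3 2 t)
    + 2919/400 * (bern3 2 s * bern3 3 t + bern3 3 s * bern3 2 t)
    + 15/4 * (bern3 3 s * bern3 3 t)) by (unfold bern3; cbn [Nat.sub pow]; field) end.
  pose proof (fun i j => Rmult_le_pos _ _ (bern3_ge_0 i s Hs) (bern3_ge_0 j t Ht)) as Hp.
  repeat apply Rplus_le_le_0_compat;
    apply Rmult_le_pos; try lra; try apply Rplus_le_le_0_compat; apply Hp.
Qed.

Lemma quad_form_ge_0 al be ga X Y : 0 < al -> ga ^ 2 <= 4 * al * be ->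
  0 <= al * X ^ 2 + be * Y ^ 2 - ga * X * Y.
Proof.
  intros Hal Hdisc.
  assert (Hsq : 4 * al * (al * X ^ 2 + be * Y ^ 2 - ga * X * Y)
                = (2 * al * X - ga * Y) ^ 2 + (4 * al * be - ga ^ 2) * Y ^ 2) by ring.
  assert (0 <= (4 * al * be - ga ^ 2) * Y ^ 2) by (apply Rmult_le_pos; [lra | apply pow2_ge_0]).
  pose proof (pow2_ge_0 (2 * al * X - ga * Y)). nra.
Qed.

Lemma kernel_poly_ge_0 p q x : 0 <= p <= 1 -> 0 <= q <= 1 -> 0 <= x <= 51/100 ->
  0 <= - 3/2 * p * q * ((1 - x*p) * (1 - x*q) ^ 2 + (1 - x*p) ^ 2 * (1 - x*q))
       - 3/4 * x * p * q * (q * (1 - x*p) ^ 2 + p * (1 - x*q) ^ 2)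
       + 2 * (p ^ 2 * (1 - x*p) * (1 - x*q) ^ 2 + q ^ 2 * (1 - x*p) ^ 2 * (1 - x*q))
       + 1/2 * x * p * q * (p + q) * (1 - x*p) * (1 - x*q)
       - 1/2 * p * q * (1 - x*p) ^ 2 * (1 - x*q) ^ 2.
Proof.
  intros Hp Hq Hx.
  assert (Ha : 49/100 <= 1 - x*p <= 1) by nra. assert (Hb : 49/100 <= 1 - x*q <= 1) by nra.
  assert (Hxp : x * p = 1 - (1 - x*p)) by ring. assert (Hxq : x * q = 1 - (1 - x*q)) by ring.
  set (a := 1 - x*p) in *. set (b := 1 - x*q) in *. clearbody a b.
  assert (HA : 0 < 2*a*b + (1 - b) * (a/2 - 3*b/4)) by nra.
  match goal with |- 0 <= ?e => replace e with
    (b * (2*a*b + (1 - b) * (a/2 - 3*b/4)) * p ^ 2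
     + a * (2*a*b + (1 - a) * (b/2 - 3*a/4)) * q ^ 2
     - a * b * (3/2 * (a + b) + a * b / 2) * p * q) end.
  2:{ rewrite <- Hxp, <- Hxq. field. }
  apply quad_form_ge_0; [nra|].
  pose proof (discriminant_bound a b Ha Hb).
  assert (0 < a * b) by nra.
  replace ((a * b * (3/2 * (a + b) + a * b / 2)) ^ 2)
    with (a * b * (a * b * (3/2 * (a + b) + a * b / 2) ^ 2)) by ring.
  replace (4 * (b * (2*a*b + (1 - b) * (a/2 - 3*b/4))) * (a * (2*a*b + (1 - a) * (b/2 - 3*a/4))))
    with (a * b * (4 * (2*a*b + (1 - b) * (a/2 - 3*b/4)) * (2*a*b + (1 - a) * (b/2 - 3*a/4))))
    by ring.
  apply Rmult_le_compat_l; lra.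
Qed.

(** * A bilinear form and its double integral *)

(* At (k, l, h, g, p) = (Phi 0 0, Phi 2 1, Phi 1 1, Phi 1 0, Phi 2 2) on both sides,
   [kform] equals 2 psi_factor - Phi 1 0 ^ 2 / 2. *)
Definition kform (x k l h g p k' l' h' g' p' : R) : R :=
  2 * (l * k' + k * l') + x / 2 * (l * h' + h * l') - 3/2 * (g * h' + h * g')
  - 3 * x / 4 * (g * p' + p * g') - 1/2 * g * g'.

Section KformIntegral.

Variables (x a b : R) (f1 f2 f3 f4 f5 : R -> R) (I1 I2 I3 I4 I5 : R).
Hypotheses (H1 : is_RInt f1 a b I1) (H2 : is_RInt f2 a b I2) (H3 : is_RInt f3 a b I3)
  (H4 : is_RInt f4 a b I4) (H5 : is_RInt f5 a b I5).

Lemma is_RInt_kform_r k l h g p :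
  is_RInt (fun v => kform x k l h g p (f1 v) (f2 v) (f3 v) (f4 v) (f5 v)) a b
    (kform x k l h g p I1 I2 I3 I4 I5).
Proof.
  set (c1 := 2 * l). set (c2 := 2 * k + x / 2 * h). set (c3 := x / 2 * l - 3/2 * g).
  set (c4 := - 3/2 * h - 3 * x / 4 * p - 1/2 * g). set (c5 := - 3 * x / 4 * g).
  assert (Hc := is_RInt_add_scal _ _ _ _ c5 a b
    (is_RInt_add_scal _ _ _ _ c4 a b
      (is_RInt_add_scal _ _ _ _ c3 a b
        (is_RInt_add_scal _ _ _ _ c2 a b
          (is_RInt_mult_l _ _ c1 _ _ H1) H2) H3) H4) H5).
  replace (kform x k l h g p I1 I2 I3 I4 I5)
    with (c1 * I1 + c2 * I2 + c3 * I3 + c4 * I4 + c5 * I5)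
    by (unfold kform, c1, c2, c3, c4, c5; field).
  eapply is_RInt_ext_R; [|exact Hc].
  intros v. unfold kform, c1, c2, c3, c4, c5. field.
Qed.

Lemma kform_sym k l h g p k' l' h' g' p' :
  kform x k l h g p k' l' h' g' p' = kform x k' l' h' g' p' k l h g p.
Proof. unfold kform. field. Qed.

Lemma kform_integral_ge_0 : a <= b ->
  (forall t v, a < t < b -> a < v < b ->
     0 <= kform x (f1 t) (f2 t) (f3 t) (f4 t) (f5 t) (f1 v) (f2 v) (f3 v) (f4 v) (f5 v)) ->
  0 <= kform x I1 I2 I3 I4 I5 I1 I2 I3 I4 I5.
Proof.
  intros Hab Hpos.
  assert (Hout : is_RInt (fun t => kform x (f1 t) (f2 t) (f3 t) (f4 t) (f5 t) I1 I2 I3 I4 I5) a b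
                   (kform x I1 I2 I3 I4 I5 I1 I2 I3 I4 I5)).
  { eapply is_RInt_ext_R; [|apply is_RInt_kform_r]. intros t. apply kform_sym. }
  apply (is_RInt_ge_0 _ _ _ _ Hab Hout). intros t Ht.
  apply (is_RInt_ge_0 _ _ _ _ Hab (is_RInt_kform_r _ _ _ _ _)). intros v Hv.
  now apply Hpos.
Qed.

End KformIntegral.

(** * The integrals [Phi m j] *)

Definition phi (m j : nat) (x t : R) : R :=
  (sin t ^ 2) ^ m / (sqrt (1 - x * sin t ^ 2) * (1 - x * sin t ^ 2) ^ j).

Definition Phi (m j : nat) (x : R) : R := RInt (phi m j x) 0 (PI / 2).

Lemma sin2_bounds t : 0 <= sin t ^ 2 <= 1.
Proof.
  replace (sin t ^ 2) with (sin t * sin t) by ring.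
  destruct (SIN_bound t); nra.
Qed.

Lemma weight_pos x t : -1 < x < 1 -> 0 < 1 - x * sin t ^ 2.
Proof.
  intros Hx. pose proof (sin2_bounds t).
  destruct (Rle_lt_dec 0 x); nra.
Qed.

Lemma sqrt_weight_pos x t : -1 < x < 1 -> 0 < sqrt (1 - x * sin t ^ 2).
Proof. intros Hx. apply sqrt_lt_R0, weight_pos, Hx. Qed.

Lemma is_derive_phi m j x t : -1 < x < 1 ->
  is_derive (fun y => phi m j y t) x ((INR j + / 2) * phi (S m) (S j) x t).
Proof.
  intros Hx. unfold phi.
  pose proof (weight_pos x t Hx) as Hw.
  pose proof (sqrt_sqrt _ (Rlt_le _ _ Hw)) as HQ.
  pose proof (sqrt_weight_pos x t Hx).
  generalize dependent (sin t ^ 2); intros s Hw HQ HQ0.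
  auto_derive.
  - replace (1 + - (x * s)) with (1 - x * s) by ring.
    repeat split; try lra.
    apply Rmult_integral_contrapositive_currified; [lra | apply pow_nonzero; lra].
  - replace (1 + - (x * s)) with (1 - x * s) by ring.
    set (Q := sqrt (1 - x * s)) in *. rewrite <- HQ.
    destruct j as [|j].
    + simpl. field. lra.
    + rewrite S_INR. simpl pred. simpl pow. field.
      split; [apply pow_nonzero, Rmult_integral_contrapositive_currified|]; lra.
Qed.

Lemma continuous_phi m j x t : -1 < x < 1 -> continuous (phi m j x) t.
Proof.
  intros Hx. apply (@ex_derive_continuous R_AbsRing R_NormedModule). unfold phi.
  pose proof (weight_pos x t Hx). pose proof (sqrt_weight_pos x t Hx).
  auto_derive.
  replace (1 + - (x * (sin t * (sin t * 1)))) with (1 - x * sin t ^ 2) by ring.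
  repeat split; try lra.
  apply Rmult_integral_contrapositive_currified; [lra | apply pow_nonzero; lra].
Qed.

Lemma ex_RInt_phi m j x a b : -1 < x < 1 -> ex_RInt (phi m j x) a b.
Proof.
  intros Hx. apply (@ex_RInt_continuous R_CompleteNormedModule).
  intros t _. now apply continuous_phi.
Qed.

Lemma is_RInt_Phi m j x : -1 < x < 1 -> is_RInt (phi m j x) 0 (PI / 2) (Phi m j x).
Proof. intros Hx. apply (@RInt_correct R_CompleteNormedModule), ex_RInt_phi, Hx. Qed.

Lemma continuity_2d_pt_phi m j x t : -1 < x < 1 -> continuity_2d_pt (phi m j) x t.
Proof.
  intros Hx. unfold phi.
  pose proof (weight_pos x t Hx). pose proof (sqrt_weight_pos x t Hx).
  assert (Hs : continuity_2d_pt (fun _ v => sin v ^ 2) x t).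
  { apply (continuity_1d_2d_pt_comp (fun v => sin v ^ 2) (fun _ v => v)).
    - reg.
    - apply continuity_2d_pt_id2. }
  assert (Hw : continuity_2d_pt (fun u v => 1 - u * sin v ^ 2) x t).
  { apply continuity_2d_pt_minus; [apply continuity_2d_pt_const|].
    apply continuity_2d_pt_mult; [apply continuity_2d_pt_id1 | exact Hs]. }
  apply continuity_2d_pt_mult.
  - apply (continuity_1d_2d_pt_comp (fun y => y ^ m) (fun _ v => sin v ^ 2)); [reg | exact Hs].
  - apply continuity_2d_pt_inv.
    + apply continuity_2d_pt_mult.
      * apply (continuity_1d_2d_pt_comp sqrt (fun u v => 1 - u * sin v ^ 2)); [|exact Hw].
        apply continuity_pt_sqrt; lra.
      * apply (continuity_1d_2d_pt_comp (fun y => y ^ j) (fun u v => 1 - u * sin v ^ 2));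
          [reg | exact Hw].
    + apply Rmult_integral_contrapositive_currified; [lra | apply pow_nonzero; lra].
Qed.

Lemma is_derive_Phi m j x : -1 < x < 1 ->
  is_derive (Phi m j) x ((INR j + / 2) * Phi (S m) (S j) x).
Proof.
  intros Hx. unfold Phi.
  assert (Hloc : locally x (fun y => -1 < y < 1)).
  { apply (locally_interval _ x (-1) 1); simpl; try lra. intros y H1 H2; simpl in *; lra. }
  replace ((INR j + / 2) * RInt (phi (S m) (S j) x) 0 (PI / 2))
    with (RInt (fun t => Derive (fun y => phi m j y t) x) 0 (PI / 2)).
  2:{ apply is_RInt_unique.
      apply (is_RInt_ext (fun t => scal (INR j + / 2) (phi (S m) (S j) x t))).
      - intros t _. symmetry. apply is_derive_unique, is_derive_phi, Hx.
      - apply (@is_RInt_scal R_NormedModule), is_RInt_Phi, Hx. }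
  apply is_derive_RInt_param.
  - apply (filter_imp (fun y => -1 < y < 1)); [|exact Hloc].
    intros y Hy t _. eexists. apply is_derive_phi, Hy.
  - intros t _.
    apply (continuity_2d_pt_ext_loc (fun u v => (INR j + / 2) * phi (S m) (S j) u v)).
    + exists (mkposreal ((1 - Rabs x) / 2) ltac:(unfold Rabs; destruct Rcase_abs; lra)).
      intros u v Hu _. simpl in Hu. symmetry. apply is_derive_unique, is_derive_phi.
      unfold Rabs in *; destruct (Rcase_abs (u - x)); destruct (Rcase_abs x); lra.
    + apply continuity_2d_pt_mult; [apply continuity_2d_pt_const|].
      now apply continuity_2d_pt_phi.
  - apply (filter_imp (fun y => -1 < y < 1)); [|exact Hloc].
    intros y Hy. now apply ex_RInt_phi.
Qed.

Lemma Derive_Phi m j x : -1 < x < 1 ->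
  Derive (fun y => Phi m j y) x = (INR j + / 2) * Phi (S m) (S j) x.
Proof. intros Hx. apply is_derive_unique, is_derive_Phi, Hx. Qed.

Lemma ex_derive_Phi m j x : -1 < x < 1 -> ex_derive (fun y => Phi m j y) x.
Proof. intros Hx. eexists. apply is_derive_Phi, Hx. Qed.

Lemma phi_ge_0 m j x t : -1 < x < 1 -> 0 <= phi m j x t.
Proof.
  intros Hx. pose proof (weight_pos x t Hx). pose proof (sqrt_weight_pos x t Hx).
  pose proof (sin2_bounds t). unfold phi.
  apply Rdiv_le_0_compat; [apply pow_le; lra|].
  apply Rmult_lt_0_compat; [lra | apply pow_lt; lra].
Qed.

Lemma Phi_ge_0 m j x : -1 < x < 1 -> 0 <= Phi m j x.
Proof.
  intros Hx. pose proof PI_RGT_0. apply RInt_ge_0; [lra | now apply ex_RInt_phi |].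
  intros t _. now apply phi_ge_0.
Qed.

Lemma Phi_recurrence m j x : -1 < x < 1 ->
  x * Phi (S m) (S j) x = Phi m (S j) x - Phi m j x.
Proof.
  intros Hx. replace (Phi m (S j) x - Phi m j x) with (Phi m (S j) x + -1 * Phi m j x) by ring.
  apply (is_RInt_ext_unique (fun t => x * phi (S m) (S j) x t)
           (fun t => phi m (S j) x t + -1 * phi m j x t) 0 (PI / 2)).
  - intros t. unfold phi.
    pose proof (weight_pos x t Hx). pose proof (sqrt_weight_pos x t Hx).
    generalize dependent (sin t ^ 2); intros s Hw HQ.
    simpl pow. field. split; [apply pow_nonzero|]; lra.
  - now apply is_RInt_mult_l, is_RInt_Phi.
  - apply is_RInt_add_scal; now apply is_RInt_Phi.
Qed.

Lemma is_derive_sin_cos_div_sqrt_weight x t : -1 < x < 1 ->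
  is_derive (fun u => sin u * cos u / sqrt (1 - x * sin u ^ 2)) t
    (phi 0 0 x t + -1 * phi 1 0 x t + - (1 - x) * phi 1 1 x t).
Proof.
  intros Hx. pose proof (weight_pos x t Hx) as Hw. pose proof (sqrt_weight_pos x t Hx).
  pose proof (sqrt_sqrt _ (Rlt_le _ _ Hw)) as HQ.
  pose proof (sin2_cos2 t) as Hsc. unfold Rsqr in Hsc.
  auto_derive.
  - replace (1 + - (x * (sin t * (sin t * 1)))) with (1 - x * sin t ^ 2) by ring. lra.
  - unfold phi. replace (1 + - (x * (sin t * (sin t * 1)))) with (1 - x * sin t ^ 2) by ring.
    set (Q := sqrt (1 - x * sin t ^ 2)) in *. clearbody Q.
    revert Hw HQ Hsc. generalize (sin t) (cos t). intros s c Hw HQ Hsc.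
    rewrite <- HQ. simpl pow. field_simplify; [|lra|lra].
    replace (c ^ 2) with (1 - s ^ 2) by (simpl; lra).
    replace (Q ^ 3) with (Q * (Q * Q)) by ring. replace (Q ^ 2) with (Q * Q) by ring.
    rewrite HQ. field. split; lra.
Qed.

Lemma Phi00_sub_Phi10 x : -1 < x < 1 -> Phi 0 0 x - Phi 1 0 x = (1 - x) * Phi 1 1 x.
Proof.
  intros Hx. set (F u := sin u * cos u / sqrt (1 - x * sin u ^ 2)).
  set (f t := phi 0 0 x t + -1 * phi 1 0 x t + - (1 - x) * phi 1 1 x t).
  assert (HF : is_RInt f 0 (PI / 2) (minus (F (PI / 2)) (F 0))).
  { apply (@is_RInt_derive R_CompleteNormedModule).
    - intros t _. now apply is_derive_sin_cos_div_sqrt_weight.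
    - intros t _. apply (@ex_derive_continuous R_AbsRing R_NormedModule).
      pose proof (weight_pos x t Hx). pose proof (sqrt_weight_pos x t Hx).
      unfold f, phi. auto_derive.
      replace (1 + - (x * (sin t * (sin t * 1)))) with (1 - x * sin t ^ 2) by ring.
      repeat split; try lra. apply Rmult_integral_contrapositive_currified; lra. }
  unfold F in HF. rewrite cos_PI2, sin_0, Rmult_0_r, Rmult_0_l, !Rdiv_0_l, minus_eq_zero in HF.
  assert (Hf := is_RInt_add_scal _ _ _ _ (- (1 - x)) _ _
    (is_RInt_add_scal _ _ _ _ (-1) _ _ (is_RInt_Phi 0 0 x Hx) (is_RInt_Phi 1 0 x Hx))
    (is_RInt_Phi 1 1 x Hx)).
  pose proof (is_RInt_ext_unique f f _ _ _ _ (fun _ => eq_refl) Hf HF) as H0.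
  unfold zero in H0; simpl in H0. lra.
Qed.

Lemma K_Phi x : 0 <= x -> K x = Phi 0 0 x.
Proof.
  intros Hx. unfold K, cK, Phi. apply RInt_ext. intros t _. unfold phi.
  rewrite pow2_sqrt, !pow_O, Rmult_1_r by lra. unfold Rdiv. now rewrite Rmult_1_l.
Qed.

Lemma E_Phi x : 0 <= x < 1 -> E x = Phi 0 0 x - x * Phi 1 0 x.
Proof.
  intros Hx. assert (Hx' : -1 < x < 1) by lra.
  replace (Phi 0 0 x - x * Phi 1 0 x) with (Phi 0 0 x + - x * Phi 1 0 x) by ring.
  rewrite <- (@is_RInt_unique R_CompleteNormedModule _ _ _ _
    (is_RInt_add_scal _ _ _ _ (- x) _ _ (is_RInt_Phi 0 0 x Hx') (is_RInt_Phi 1 0 x Hx'))).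
  unfold E, cE. rewrite pow2_sqrt by lra. apply RInt_ext. intros t _. unfold phi.
  pose proof (weight_pos x t Hx'). pose proof (sqrt_weight_pos x t Hx').
  pose proof (sqrt_sqrt (1 - x * sin t ^ 2)) as HQ.
  set (Q := sqrt (1 - x * sin t ^ 2)) in *. rewrite !pow_O, !pow_1.
  match goal with |- @eq _ ?a ?b => change (@eq R a b) end.
  transitivity (Q * Q / Q); [field; lra|]. rewrite HQ by lra. field. lra.
Qed.

Lemma Phi_0_le m j x : 0 <= x < 1 -> Phi m j 0 <= Phi m j x.
Proof.
  intros Hx. assert (H0 : -1 < 0 < 1) by lra. assert (Hx' : -1 < x < 1) by lra.
  pose proof PI_RGT_0.
  apply RInt_le; [lra | now apply ex_RInt_phi | now apply ex_RInt_phi |].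
  intros t _. unfold phi.
  pose proof (sin2_bounds t). pose proof (sqrt_weight_pos x t Hx').
  assert (Hw : 0 < 1 - x * sin t ^ 2 <= 1).
  { split; [apply weight_pos, Hx' |].
    assert (0 <= x * sin t ^ 2) by (apply Rmult_le_pos; lra). lra. }
  assert (HQ : sqrt (1 - x * sin t ^ 2) <= 1).
  { rewrite <- sqrt_1 at 2. apply sqrt_le_1_alt. lra. }
  rewrite Rmult_0_l, Rminus_0_r, sqrt_1, pow1, Rmult_1_l, Rdiv_1_r.
  rewrite <- (Rdiv_1_r ((sin t ^ 2) ^ m)) at 1.
  apply Rmult_le_compat_l; [apply pow_le; lra|].
  apply Rinv_le_contravar; [apply Rmult_lt_0_compat; [lra | apply pow_lt; lra]|].
  apply Rle_trans with (1 * 1); [|lra].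
  apply Rmult_le_compat; [lra | apply pow_le; lra | lra |].
  apply Rle_trans with (1 ^ j); [apply pow_incr; lra | now rewrite pow1].
Qed.

Lemma Phi00_at_0 : Phi 0 0 0 = PI / 2.
Proof.
  unfold Phi. transitivity (RInt (fun _ => 1) 0 (PI / 2)).
  - apply RInt_ext. intros t _. unfold phi.
    rewrite Rmult_0_l, Rminus_0_r, sqrt_1, !pow_O, Rmult_1_r. apply Rdiv_1_r.
  - rewrite (RInt_const (V := R_CompleteNormedModule)). unfold scal; simpl; unfold mult; simpl.
    ring.
Qed.

Lemma Phi10_at_0 : Phi 1 0 0 = PI / 4.
Proof.
  unfold Phi. set (F t := (t - sin t * cos t) / 2).
  assert (HF : is_RInt (fun t => sin t ^ 2) 0 (PI / 2) (minus (F (PI / 2)) (F 0))).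
  { apply (@is_RInt_derive R_CompleteNormedModule).
    - intros t _. unfold F. auto_derive; [easy|].
      pose proof (sin2_cos2 t) as Hsc. unfold Rsqr in Hsc.
      change RinvImpl.Rinv with Rinv. field_simplify. nra.
    - intros t _. apply (@ex_derive_continuous R_AbsRing R_NormedModule). auto_derive. easy. }
  unfold F in HF. rewrite cos_PI2, cos_0, sin_0 in HF.
  apply (@is_RInt_unique R_CompleteNormedModule) in HF.
  transitivity (RInt (fun t => sin t ^ 2) 0 (PI / 2)).
  - apply RInt_ext. intros t _. unfold phi.
    rewrite Rmult_0_l, Rminus_0_r, sqrt_1, pow_O, pow_1, Rmult_1_r. apply Rdiv_1_r.
  - rewrite HF. unfold minus, plus, opp; simpl. field.
Qed.

Lemma Phi00_ge x : 0 <= x < 1 -> PI / 2 <= Phi 0 0 x.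
Proof. intros Hx. rewrite <- Phi00_at_0. now apply Phi_0_le. Qed.

Lemma Phi10_ge x : 0 <= x < 1 -> PI / 4 <= Phi 1 0 x.
Proof. intros Hx. rewrite <- Phi10_at_0. now apply Phi_0_le. Qed.

Lemma kform_phi_ge_0 x t v : 0 <= x <= 51/100 ->
  0 <= kform x (phi 0 0 x t) (phi 2 1 x t) (phi 1 1 x t) (phi 1 0 x t) (phi 2 2 x t)
               (phi 0 0 x v) (phi 2 1 x v) (phi 1 1 x v) (phi 1 0 x v) (phi 2 2 x v).
Proof.
  intros Hx. assert (Hx' : -1 < x < 1) by lra.
  pose proof (weight_pos x t Hx'). pose proof (weight_pos x v Hx').
  pose proof (sqrt_weight_pos x t Hx'). pose proof (sqrt_weight_pos x v Hx').
  pose proof (kernel_poly_ge_0 _ _ x (sin2_bounds t) (sin2_bounds v) Hx) as Hpoly.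
  unfold kform, phi. rewrite !pow_O, !pow_1.
  set (Qt := sqrt (1 - x * sin t ^ 2)) in *. set (Qv := sqrt (1 - x * sin v ^ 2)) in *.
  set (p := sin t ^ 2) in *. set (q := sin v ^ 2) in *. clearbody Qt Qv p q.
  match goal with |- 0 <= ?e => replace e with
    ((- 3/2 * p * q * ((1 - x*p) * (1 - x*q) ^ 2 + (1 - x*p) ^ 2 * (1 - x*q))
       - 3/4 * x * p * q * (q * (1 - x*p) ^ 2 + p * (1 - x*q) ^ 2)
       + 2 * (p ^ 2 * (1 - x*p) * (1 - x*q) ^ 2 + q ^ 2 * (1 - x*p) ^ 2 * (1 - x*q))
       + 1/2 * x * p * q * (p + q) * (1 - x*p) * (1 - x*q)
       - 1/2 * p * q * (1 - x*p) ^ 2 * (1 - x*q) ^ 2)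
     / (Qt * Qv * (1 - x*p) ^ 2 * (1 - x*q) ^ 2)) by (field; lra) end.
  apply Rdiv_le_0_compat; [exact Hpoly|].
  repeat apply Rmult_lt_0_compat; try lra; apply pow_lt; lra.
Qed.

(** * Monotonicity of the ratio *)

Definition numer (x : R) : R := (Phi 0 0 x - x * Phi 1 0 x) ^ 2 - (1 - x) * Phi 0 0 x ^ 2.

Lemma is_derive_numer x : -1 < x < 1 -> is_derive numer x (x * Phi 1 0 x ^ 2).
Proof.
  intros Hx. unfold numer. auto_derive; [repeat split; now apply ex_derive_Phi|].
  rewrite !Derive_Phi by exact Hx. simpl INR.
  transitivity (x * Phi 1 0 x ^ 2
    - (Phi 0 0 x - x * Phi 1 0 x) * (x * Phi 2 1 x - (Phi 1 1 x - Phi 1 0 x))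
    - Phi 0 0 x * ((1 - x) * Phi 1 1 x - (Phi 0 0 x - Phi 1 0 x))); [field|].
  rewrite Phi_recurrence, Phi00_sub_Phi10 by exact Hx. ring.
Qed.

Lemma numer_ge x : 0 < x < 1 -> x ^ 2 * (PI / 4) ^ 2 / 2 <= numer x.
Proof.
  intros Hx.
  assert (Hle : 0 - 0 ^ 2 * (PI / 4) ^ 2 / 2 <= numer x - x ^ 2 * (PI / 4) ^ 2 / 2);
    [|lra].
  replace 0 with (numer 0) at 1 by (unfold numer; ring).
  apply (is_derive_nonneg_le (fun y => numer y - y ^ 2 * (PI / 4) ^ 2 / 2)
           (fun y => y * Phi 1 0 y ^ 2 - y * (PI / 4) ^ 2)); [lra | |].
  - intros c Hc. apply (is_derive_minus numer (fun y => y ^ 2 * (PI / 4) ^ 2 / 2)).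
    + apply is_derive_numer; lra.
    + auto_derive; [easy | field].
  - intros c Hc. pose proof (Phi10_ge c ltac:(lra)). pose proof PI_RGT_0.
    replace (c * Phi 1 0 c ^ 2 - c * (PI / 4) ^ 2)
      with (c * ((Phi 1 0 c - PI / 4) * (Phi 1 0 c + PI / 4))) by ring.
    apply Rmult_le_pos; [lra | apply Rmult_le_pos; lra].
Qed.

Definition psi_factor (x : R) : R :=
  2 * Phi 2 1 x * Phi 0 0 x + x * Phi 2 1 x * Phi 1 1 x / 2
  - Phi 1 0 x * (3 * Phi 1 1 x / 2 + 3 * x / 4 * Phi 2 2 x).

Lemma psi_factor_ge x : 0 <= x <= 51/100 -> Phi 1 0 x ^ 2 / 4 <= psi_factor x.
Proof.
  intros Hx. assert (Hx' : -1 < x < 1) by lra. pose proof PI_RGT_0.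
  assert (Hk := kform_integral_ge_0 x 0 (PI / 2) _ _ _ _ _ _ _ _ _ _
    (is_RInt_Phi 0 0 x Hx') (is_RInt_Phi 2 1 x Hx') (is_RInt_Phi 1 1 x Hx')
    (is_RInt_Phi 1 0 x Hx') (is_RInt_Phi 2 2 x Hx') ltac:(lra)
    (fun t v _ _ => kform_phi_ge_0 x t v Hx)).
  unfold kform in Hk. unfold psi_factor. lra.
Qed.

Definition psi (x : R) : R :=
  2 * x ^ 2 * Phi 1 0 x ^ 2 * Phi 0 0 x / (4 * Phi 0 0 x + x * Phi 1 1 x) - numer x.

Lemma Phi_denom_pos x : 0 <= x < 1 -> 0 < 4 * Phi 0 0 x + x * Phi 1 1 x.
Proof.
  intros Hx. pose proof (Phi00_ge x Hx). pose proof (Phi_ge_0 1 1 x ltac:(lra)).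
  pose proof PI_RGT_0. assert (0 <= x * Phi 1 1 x) by (apply Rmult_le_pos; lra). lra.
Qed.

Lemma is_derive_psi x : 0 <= x < 1 ->
  is_derive psi x
    (4 * x ^ 2 * Phi 1 0 x * Phi 0 0 x * psi_factor x / (4 * Phi 0 0 x + x * Phi 1 1 x) ^ 2).
Proof.
  intros Hx. assert (Hx' : -1 < x < 1) by lra. pose proof (Phi_denom_pos x Hx).
  unfold psi. auto_derive.
  - repeat match goal with |- _ /\ _ => split end; try easy.
    + exact (ex_derive_Phi 1 0 x Hx').
    + exact (ex_derive_Phi 0 0 x Hx').
    + exact (ex_derive_Phi 0 0 x Hx').
    + exact (ex_derive_Phi 1 1 x Hx').
    + lra.
    + eexists. apply is_derive_numer, Hx'.
  - rewrite !Derive_Phi by exact Hx'.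
    replace (Derive (fun y => numer y) x) with (x * Phi 1 0 x ^ 2)
      by (symmetry; apply is_derive_unique, is_derive_numer, Hx').
    simpl INR. unfold psi_factor. field. lra.
Qed.

Lemma psi_pos x : 0 < x <= 51/100 -> 0 < psi x.
Proof.
  intros Hx. replace 0 with (psi 0) by (unfold psi, numer, Rdiv; ring).
  apply (is_derive_pos_lt psi (fun c =>
    4 * c ^ 2 * Phi 1 0 c * Phi 0 0 c * psi_factor c / (4 * Phi 0 0 c + c * Phi 1 1 c) ^ 2));
    [lra | intros c Hc; apply is_derive_psi; lra |].
  intros c Hc. assert (Hc' : 0 <= c < 1) by lra.
  pose proof (Phi10_ge c Hc'). pose proof (Phi00_ge c Hc'). pose proof PI_RGT_0.
  pose proof (psi_factor_ge c ltac:(lra)). pose proof (Phi_denom_pos c Hc').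
  assert (0 < Phi 1 0 c ^ 2) by (apply pow_lt; lra).
  apply Rdiv_lt_0_compat; [|apply pow_lt; lra].
  repeat apply Rmult_lt_0_compat; try lra; apply pow_lt; lra.
Qed.

Definition ratio (x : R) : R := numer x / (x ^ 2 * Phi 0 0 x).

Lemma is_derive_ratio x : 0 < x < 1 ->
  is_derive ratio x
    (x * (4 * Phi 0 0 x + x * Phi 1 1 x) / 2 * psi x / (x ^ 2 * Phi 0 0 x) ^ 2).
Proof.
  intros Hx. assert (Hx' : -1 < x < 1) by lra. assert (Hx0 : 0 <= x < 1) by lra.
  pose proof (Phi00_ge x Hx0). pose proof PI_RGT_0. pose proof (Phi_denom_pos x Hx0).
  unfold ratio. auto_derive.
  - repeat match goal with |- _ /\ _ => split end; try easy.
    + eexists. apply is_derive_numer, Hx'.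
    + exact (ex_derive_Phi 0 0 x Hx').
    + apply Rmult_integral_contrapositive_currified; [|lra].
      apply Rmult_integral_contrapositive_currified; lra.
  - rewrite !Derive_Phi by exact Hx'.
    replace (Derive (fun y => numer y) x) with (x * Phi 1 0 x ^ 2)
      by (symmetry; apply is_derive_unique, is_derive_numer, Hx').
    simpl INR. unfold psi. field. repeat split; lra.
Qed.

Lemma ratio_increasing a b : 0 < a -> a < b -> b <= 51/100 -> ratio a < ratio b.
Proof.
  intros Ha Hab Hb.
  apply (is_derive_pos_lt ratio (fun c =>
    c * (4 * Phi 0 0 c + c * Phi 1 1 c) / 2 * psi c / (c ^ 2 * Phi 0 0 c) ^ 2));
    [lra | intros c Hc; apply is_derive_ratio; lra |].
  intros c Hc. assert (Hc' : 0 <= c < 1) by lra.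
  pose proof (Phi00_ge c Hc'). pose proof PI_RGT_0. pose proof (Phi_denom_pos c Hc').
  pose proof (psi_pos c ltac:(lra)).
  apply Rdiv_lt_0_compat; [|apply pow_lt, Rmult_lt_0_compat; [apply pow_lt|]; lra].
  apply Rmult_lt_0_compat; [|lra]. apply Rdiv_lt_0_compat; [|lra].
  apply Rmult_lt_0_compat; lra.
Qed.

Lemma ratio_ge x : 0 < x <= 51/100 -> PI / 16 <= ratio x.
Proof.
  intros Hx. pose proof PI_RGT_0.
  assert (Hlow : forall y, 0 < y <= 51/100 -> (PI / 4) ^ 2 / 2 <= ratio y * Phi 0 0 y).
  { intros y Hy. pose proof (numer_ge y ltac:(lra)). pose proof (Phi00_ge y ltac:(lra)).
    assert (0 < y ^ 2) by (apply pow_lt; lra).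
    unfold ratio. replace (numer y / (y ^ 2 * Phi 0 0 y) * Phi 0 0 y) with (numer y / y ^ 2)
      by (field; lra).
    apply (Rmult_le_reg_r (y ^ 2)); [lra|].
    replace (numer y / y ^ 2 * y ^ 2) with (numer y) by (field; lra). lra. }
  assert (HK : (PI / 4) ^ 2 / 2 <= ratio x * Phi 0 0 0).
  { apply (continuity_pt_ge_right (fun y => ratio x * Phi 0 0 y) 0 x); [lra | |].
    - apply derivable_continuous_pt. eexists. apply is_derive_Reals.
      apply (is_derive_scal (fun y => Phi 0 0 y)), is_derive_Phi. lra.
    - intros y Hy. pose proof (Phi00_ge y ltac:(lra)). pose proof (Hlow y ltac:(lra)).
      pose proof (ratio_increasing y x ltac:(lra) ltac:(lra) ltac:(lra)).
      apply Rle_trans with (ratio y * Phi 0 0 y); [lra|].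
      apply Rmult_le_compat_r; lra. }
  rewrite Phi00_at_0 in HK.
  apply (Rmult_le_reg_r (PI / 2)); [lra|].
  replace (PI / 16 * (PI / 2)) with ((PI / 4) ^ 2 / 2) by field. exact HK.
Qed.

Lemma alpha8_lt_51_100 : alpha8 < 51/100.
Proof.
  unfold alpha8.
  assert (2449/1000 < sqrt 6).
  { rewrite <- (sqrt_pow2 (2449/1000)) by lra. apply sqrt_lt_1_alt. lra. }
  lra.
Qed.

Lemma ratio8_ratio x : 0 < x < 1 -> ratio8 x = ratio x.
Proof. intros Hx. unfold ratio8, ratio, numer. rewrite K_Phi, E_Phi by lra. reflexivity. Qed.

Theorem mainTheorem8 :
  (forall x y : R, 0 < x -> x < y -> y < alpha8 -> ratio8 x < ratio8 y) /\
  (forall x : R, 0 < x < alpha8 ->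
     E x ^ 2 - (1 - x) * K x ^ 2 >= PI / 16 * (x ^ 2 * K x)).
Proof.
  pose proof alpha8_lt_51_100. split.
  - intros x y Hx Hxy Hy. rewrite !ratio8_ratio by lra. apply ratio_increasing; lra.
  - intros x Hx. pose proof (ratio_ge x ltac:(lra)) as Hr.
    rewrite <- ratio8_ratio in Hr by lra.
    assert (HK : 0 < K x).
    { rewrite K_Phi by lra. pose proof (Phi00_ge x ltac:(lra)). pose proof PI_RGT_0. lra. }
    replace (E x ^ 2 - (1 - x) * K x ^ 2) with (ratio8 x * (x ^ 2 * K x))
      by (unfold ratio8; field; lra).
    apply Rle_ge, Rmult_le_compat_r; [|exact Hr].
    apply Rmult_le_pos; [apply pow2_ge_0 | lra].
Qed.
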